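(* For every integer $n\ge0$ and every non-decreasing sequence $\underline s=(s_1,\dots,s_u)\in S^u$, $$g_n^{(\underline s),\dagger}(w)=\prod_{i=1}^u g_{n_{u,i}}^{(s_i),\dagger}(w).$$
   Context: Fix a prime $p\ge7$ and $k_0\in\{2,\dots,p\}$. $\{n\}$ is the residue of $n$ mod $p-1$ in $\{0,\dots,p-2\}$. $\mathcal K=\{k\ge2:k\equiv k_0\pmod{p-1}\}$, $k_\bullet=(k-k_0)/(p-1)$. For $s\in\{0,\dots,p-2\}$: $a_s=\{k_0-2-2s\}$, $\delta_s=\lfloor\frac{s+\{a_s+s\}}{p-1}\rfloor$; if $a_s+s<p-1$, $t_1^{(s)}=s+\delta_s$, $t_2^{(s)}=a_s+s+\delta_s+2$; otherwise $t_1^{(s)}=\{a_s+s\}+\delta_s+1$, $t_2^{(s)}=s+\delta_s+1$. For $k\in\mathcal K$: $d_k^{ur,\dagger}(s)=\lfloor\frac{k_\bullet-t_1^{(s)}}{p+1}\rfloor+\lfloor\frac{k_\bullet-t_2^{(s)}}{p+1}\rfloor+2+\delta_s$. $S=\{\lceil\frac{k_0+1}{2}\rceil,\dots,\lfloor\frac{k_0+p-4}{2}\rfloor\}$. For a sequence $\underline s=(s_1,\dots,s_u)$ and $k\in\mathcal K$, put $D^{ur}=\sum_id_k^{ur,\dagger}(s_i)$, $D^{Iw}=u(2k_\bullet+2)$, $m_n^{(\underline s),\dagger}(k)=\min\{n-D^{ur},D^{Iw}-D^{ur}-n\}$ if $D^{ur}<n<D^{Iw}-D^{ur}$ and $0$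 otherwise, $w_k=\exp((k-2)p)-1$, $g_n^{(\underline s),\dagger}(w)=\prod_{k\in\mathcal K}(w-w_k)^{m_n^{(\underline s),\dagger}(k)}$ (for $u=1$ write $(s)$). For $n\ge0,u\ge1$, $q=\lfloor n/u\rfloor$: if $q$ even, $n_{u,i}=q$ for $i\le u(q+1)-n$ and $q+1$ otherwise; if $q$ odd, $n_{u,i}=q+1$ for $i\le n-uq$ and $q$ otherwise. *)

From HB Require Import structures.
From mathcomp Require Import all_boot all_order all_algebra.
Set Implicit Arguments. Unset Strict Implicit. Unset Printing Implicit Defensive.
Import Order.TTheory GRing.Theory Num.Theory.

(* All integer-valued quantities are computed in [int]; [%/] and [%%] on int
   (intdiv) are floor division / nonnegative remainder for a positive divisor. *)
Local Open Scope ring_scope.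

Definition resid (p : nat) (x : int) : int := (x %% (p.-1)%:Z)%Z.

Definition a_s (p k0 : nat) (s : nat) : int :=
  resid p (k0%:Z - 2 - 2 * s%:Z).

Definition delta_s (p k0 s : nat) : int :=
  ((s%:Z + resid p (a_s p k0 s + s%:Z)) %/ (p.-1)%:Z)%Z.

Definition t1 (p k0 s : nat) : int :=
  if a_s p k0 s + s%:Z < (p.-1)%:Z then s%:Z + delta_s p k0 s
  else resid p (a_s p k0 s + s%:Z) + delta_s p k0 s + 1.

Definition t2 (p k0 s : nat) : int :=
  if a_s p k0 s + s%:Z < (p.-1)%:Z then a_s p k0 s + s%:Z + delta_s p k0 s + 2
  else s%:Z + delta_s p k0 s + 1.

(* d_k^{ur,dagger}(s), with kb = k_bullet = (k - k0)/(p-1) *)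
Definition dur (p k0 s kb : nat) : int :=
  ((kb%:Z - t1 p k0 s) %/ (p.+1)%:Z)%Z + ((kb%:Z - t2 p k0 s) %/ (p.+1)%:Z)%Z
  + 2 + delta_s p k0 s.

Definition Dur (p k0 : nat) (ss : seq nat) (kb : nat) : int :=
  \sum_(s <- ss) dur p k0 s kb.

Definition DIw (ss : seq nat) (kb : nat) : int :=
  (size ss)%:Z * (2 * kb%:Z + 2).

Definition mexp (p k0 n : nat) (ss : seq nat) (kb : nat) : nat :=
  let Du := Dur p k0 ss kb in
  let Di := DIw ss kb in
  if (Du < n%:Z) && (n%:Z < Di - Du)
  then absz (Num.min (n%:Z - Du) (Di - Du - n%:Z))
  else 0%N.

(* For
   kb >= (n+2)(p+1) every exponent mexp vanishes (since t1,t2 <= p+1, each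
   d^ur(s) > n), so this finite product equals the product over all k in K. *)
Definition kbound (p n : nat) : nat := ((n + 2) * p.+1)%N.

(* k ranges over K = { k0 + (p-1) kb : kb in nat }; w k is the value w_k. *)
Definition gpoly (R : comNzRingType) (w : nat -> R) (p k0 n : nat) (ss : seq nat)
  : {poly R} :=
  \prod_(kb < kbound p n)
     ('X - (w (k0 + p.-1 * kb)%N)%:P) ^+ mexp p k0 n ss kb.

Definition inS (p k0 s : nat) : bool :=
  ((k0 + 2) %/ 2 <= s)%N && (s <= (k0 + p - 4) %/ 2)%N.

(* n_{u,i}, for 1 <= i <= u *)
Definition nui (n u i : nat) : nat :=
  let q := (n %/ u)%N in
  if ~~ odd q then (if (i <= u * q.+1 - n)%N then q else q.+1)
  else (if (i <= n - u * q)%N then q.+1 else q).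

From HB Require Import structures.
From mathcomp Require Import all_boot all_order all_algebra zify.
Import Order.TTheory GRing.Theory Num.Theory.
Set Implicit Arguments.
Unset Strict Implicit.
Unset Printing Implicit Defensive.
Local Open Scope ring_scope.

(* For each k the exponent m_n(k) is the positive part of the tent
   min(n - D^ur, D^Iw - D^ur - n), so the identity reduces to the additivity of
   these exponents at every k.  On S one has
   d^ur(s) = 2 + floor((k_b - s - 1)/(p+1)) + floor((k_b + s + 1 - k0)/(p+1)),
   and along a non-decreasing sequence these values move by at most one, and
   only when leaving an even value; the same holds for the balanced parts
   n_{u,i} in {q, q+1}.  All n_{u,i} lie on the same side of
   k_b + 1, so the tents add up; and two tents can only have opposite signs if
   both arguments move at once, which parity forbids, so taking positive parts
   commutes with the sum. *)

Lemma divz_fit (x d q : int) : 0 < d -> q * d <= x < q * d + d -> (x %/ d)%Z = q.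
Proof.
move=> d_gt0 /andP[lo hi]; apply/eqP; rewrite eq_le.
by rewrite lez_divRL // -ltzD1 ltz_divLR // mulrDl mul1r hi lo.
Qed.

Lemma modz_fit (x d q : int) : 0 < d -> q * d <= x < q * d + d ->
  (x %% d)%Z = x - q * d.
Proof. by move=> d_gt0 xq; rewrite /modz (divz_fit d_gt0 xq). Qed.

Lemma divz_window (x y d : int) : 0 < d -> x <= y < x + d ->
  (x %/ d)%Z <= (y %/ d)%Z <= (x %/ d)%Z + 1.
Proof.
move=> d_gt0 /andP[xy yx]; rewrite (lez_pdiv2r (ltW d_gt0) xy) /=.
rewrite -ltzD1 ltz_divLR //; have := ltz_ceil x d_gt0; nia.
Qed.

Lemma sum_max0 (R : realDomainType) (I : finType) (T : I -> R) :
  (forall i j, 0 < T i -> 0 <= T j) ->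
  \sum_i Num.max 0 (T i) = Num.max 0 (\sum_i T i).
Proof.
move=> same_sign; case: (boolP [exists i, 0 < T i]) => [/existsP[i Ti_gt0]|].
- have T_ge0 j : 0 <= T j by exact: same_sign Ti_gt0.
  rewrite [RHS]max_r ?sumr_ge0 //; apply: eq_bigr => j _; exact: max_r.
- move=> /existsPn T_le0; have {}T_le0 j : T j <= 0 by rewrite leNgt T_le0.
  by rewrite [RHS]max_l ?sumr_le0 // big1 // => j _; exact: max_l.
Qed.

Definition tent (c D m : int) : int := Num.min (m - D) (2 * c - D - m).

Lemma tent_ge c D m : c <= m -> tent c D m = 2 * c - D - m.
Proof. by rewrite /tent; lia. Qed.

Lemma tent_le c D m : m <= c -> tent c D m = m - D.
Proof. by rewrite /tent; lia. Qed.

Lemma tent_sign_stable c D D' m m' :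
  D - 1 <= D' <= D + 1 -> m - 1 <= m' <= m + 1 ->
  (m' != m -> D' != D -> (2 %| m - D)%Z) ->
  (0 < tent c D m -> 0 <= tent c D' m') /\ (0 < tent c D' m' -> 0 <= tent c D m).
Proof. by rewrite /tent; lia. Qed.

Lemma sum_tent (I : finType) (c : int) (D m : I -> int) :
  (forall i, c <= m i) \/ (forall i, m i <= c) ->
  \sum_i tent c (D i) (m i) = tent (#|I|%:Z * c) (\sum_i D i) (\sum_i m i).
Proof.
have sum_c : \sum_(i : I) c = #|I|%:Z * c by rewrite sumr_const -mulr_natl natz.
case=> [m_ge|m_le].
- rewrite tent_ge; last by rewrite -sum_c; exact: ler_sum.
  by rewrite (eq_bigr _ (fun i _ => tent_ge (D i) (m_ge i))) !sumrB -mulr_sumr sum_c.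
- rewrite tent_le; last by rewrite -sum_c; exact: ler_sum.
  by rewrite (eq_bigr _ (fun i _ => tent_le (D i) (m_le i))) sumrB.
Qed.

Lemma sum_threshold (u r x y : nat) :
  (\sum_(i < u) (if i < r then x else y) = minn r u * x + (u - r) * y)%N.
Proof.
elim: u => [|u IH]; first by rewrite big_ord0 minn0.
rewrite big_ord_recr /= IH; case: (ltnP u r) => [u_lt|r_le].
- have -> : minn r u.+1 = u.+1 by lia.
  have [-> ->] : (u - r = 0 /\ u.+1 - r = 0)%N by split; lia.
  by rewrite mulSn; lia.
- have -> : minn r u.+1 = r by lia.
  by rewrite subSn // mulSn; lia.
Qed.

Lemma nui_val n u i : nui n u i = (n %/ u)%N \/ nui n u i = (n %/ u).+1.
Proof. by rewrite /nui; case: (odd _); case: ifP; auto. Qed.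

Lemma nui_le n u i : (nui n u i <= n.+1)%N.
Proof. by have := leq_div n u; case: (nui_val n u i) => ->; lia. Qed.

Lemma nui_sum n u : (0 < u)%N -> (\sum_(i < u) nui n u i.+1)%N = n.
Proof.
move=> u_gt0; rewrite /nui; have r_lt := ltn_pmod n u_gt0.
have n_eq := divn_eq n u; move: (n %/ u)%N (n %% u)%N n_eq r_lt => q r -> r_lt.
case: (odd q) => /=; rewrite sum_threshold.
- have -> : (q * u + r - u * q = r)%N by lia.
  by rewrite (minn_idPl (ltnW r_lt)); nia.
- have -> : (u * q.+1 - (q * u + r) = u - r)%N by nia.
  by rewrite (minn_idPl (leq_subr _ _)) subKn ?(ltnW r_lt) //; nia.
Qed.

Lemma nui_jump_even n u i j : (i <= j)%N -> nui n u i != nui n u j ->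
  ~~ odd (nui n u i).
Proof.
rewrite /nui => le_ij; case odd_q: (odd _) => /=;
  do 2 case: ifP => //=; rewrite ?odd_q //; lia.
Qed.

Lemma dur_inS p k0 s kb : (2 <= k0 <= p)%N -> inS p k0 s ->
  dur p k0 s kb = 2 + ((kb%:Z - s%:Z - 1) %/ (p.+1)%:Z)%Z
                    + ((kb%:Z + s%:Z + 1 - k0%:Z) %/ (p.+1)%:Z)%Z.
Proof.
move=> /andP[k0_ge2 k0_le] /andP[s_lo s_hi].
have a_sE : a_s p k0 s = k0%:Z - 2 - 2 * s%:Z + (p%:Z - 1).
  by rewrite /a_s /resid (@modz_fit _ _ (-1)); lia.
(* The branch is [k0 - 2 < s]; there delta_s = 1, otherwise delta_s = 0. *)
rewrite /dur /t1 /t2 /delta_s; case: ifP; rewrite a_sE => branch.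
- have -> : resid p (k0%:Z - 2 - 2 * s%:Z + (p%:Z - 1) + s%:Z)
      = k0%:Z - 2 - 2 * s%:Z + (p%:Z - 1) + s%:Z.
    by rewrite /resid (@modz_fit _ _ 0); lia.
  rewrite (@divz_fit _ (p.-1)%:Z 1); [|lia..].
  have -> : kb%:Z - (k0%:Z - 2 - 2 * s%:Z + (p%:Z - 1) + s%:Z + 1 + 2)
      = -1 * (p.+1)%:Z + (kb%:Z + s%:Z + 1 - k0%:Z) by lia.
  have -> : kb%:Z - (s%:Z + 1) = kb%:Z - s%:Z - 1 by lia.
  rewrite divzMDl; lia.
- have -> : resid p (k0%:Z - 2 - 2 * s%:Z + (p%:Z - 1) + s%:Z)
      = k0%:Z - 2 - s%:Z.
    by rewrite /resid (@modz_fit _ _ 1); lia.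
  rewrite (@divz_fit _ (p.-1)%:Z 0); [|lia..].
  have -> : kb%:Z - (k0%:Z - 2 - s%:Z + 0 + 1) = kb%:Z + s%:Z + 1 - k0%:Z by lia.
  have -> : kb%:Z - (s%:Z + 0 + 1) = kb%:Z - s%:Z - 1 by lia.
  lia.
Qed.

Lemma dur_step p k0 s s' kb : (2 <= k0 <= p)%N -> inS p k0 s -> inS p k0 s' ->
  (s <= s')%N ->
  dur p k0 s kb - 1 <= dur p k0 s' kb <= dur p k0 s kb + 1 /\
  (dur p k0 s' kb != dur p k0 s kb -> (2 %| dur p k0 s kb)%Z).
Proof.
move=> k0_range s_inS s'_inS le_ss'; rewrite !dur_inS //.
have window t : inS p k0 t ->
    ((kb%:Z - t%:Z - 1) %/ (p.+1)%:Z)%Z <= ((kb%:Z + t%:Z + 1 - k0%:Z) %/ (p.+1)%:Z)%Z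
    <= ((kb%:Z - t%:Z - 1) %/ (p.+1)%:Z)%Z + 1.
  by move=> /andP[t_lo t_hi]; apply: divz_window => //; lia.
have lo_mono : ((kb%:Z - s'%:Z - 1) %/ (p.+1)%:Z)%Z <= ((kb%:Z - s%:Z - 1) %/ (p.+1)%:Z)%Z.
  by apply: lez_pdiv2r => //; lia.
have hi_mono : ((kb%:Z + s%:Z + 1 - k0%:Z) %/ (p.+1)%:Z)%Z
    <= ((kb%:Z + s'%:Z + 1 - k0%:Z) %/ (p.+1)%:Z)%Z.
  by apply: lez_pdiv2r => //; lia.
have := window _ s_inS; have := window _ s'_inS; lia.
Qed.

Lemma dur_gt p k0 s kb m : (2 <= k0 <= p)%N -> inS p k0 s ->
  (kbound p m <= kb)%N -> m%:Z + 1 <= dur p k0 s kb.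
Proof.
move=> k0_range s_inS kb_ge; rewrite dur_inS //; move: s_inS => /andP[s_lo s_hi].
have floor_ge x : (m%:Z + 1) * (p.+1)%:Z <= x -> m%:Z + 1 <= (x %/ (p.+1)%:Z)%Z.
  by rewrite lez_divRL.
have := floor_ge (kb%:Z - s%:Z - 1); have := floor_ge (kb%:Z + s%:Z + 1 - k0%:Z).
move: kb_ge; rewrite /kbound; nia.
Qed.

Lemma Dur_nth p k0 ss kb :
  Dur p k0 ss kb = \sum_(i < size ss) dur p k0 (nth 0%N ss i) kb.
Proof. by rewrite /Dur (big_nth 0%N) big_mkord. Qed.

Lemma mexpE p k0 n ss kb : (mexp p k0 n ss kb)%:Z
  = Num.max 0 (tent ((size ss)%:Z * (kb%:Z + 1)) (Dur p k0 ss kb) n%:Z).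
Proof. by rewrite /mexp /tent /DIw; case: ifP; lia. Qed.

Lemma mexp_eq0 p k0 m ss kb : (2 <= k0 <= p)%N -> (0 < size ss)%N ->
  all (inS p k0) ss -> (kbound p m <= kb)%N -> mexp p k0 m ss kb = 0%N.
Proof.
move=> k0_range ss_gt0 ss_inS kb_ge; apply/eqP; rewrite -eqz_nat mexpE; apply/eqP.
have : (size ss)%:Z * (m%:Z + 1) <= Dur p k0 ss kb.
  have <- : \sum_(i < size ss) (m%:Z + 1) = (size ss)%:Z * (m%:Z + 1).
    by rewrite sumr_const card_ord -mulr_natl natz.
  rewrite Dur_nth.
  by apply: ler_sum => i _; apply: dur_gt => //; exact: all_nthP.
by rewrite /tent; nia.
Qed.

Lemma gpoly_widen (R : comNzRingType) (w : nat -> R) p k0 m ss B :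
  (2 <= k0 <= p)%N -> (0 < size ss)%N -> all (inS p k0) ss ->
  (kbound p m <= B)%N ->
  gpoly w p k0 m ss
  = \prod_(kb < B) ('X - (w (k0 + p.-1 * kb)%N)%:P) ^+ mexp p k0 m ss kb.
Proof.
move=> k0_range ss_gt0 ss_inS le_B; rewrite /gpoly.
rewrite (big_ord_widen _
  (fun kb => ('X - (w (k0 + p.-1 * kb)%N)%:P) ^+ mexp p k0 m ss kb) le_B).
rewrite big_mkcond /=; apply: eq_bigr => kb _; case: ifP => // kb_ge.
by rewrite mexp_eq0 ?expr0 // leqNgt kb_ge.
Qed.

Lemma mexp_balanced p k0 n ss kb : (2 <= k0 <= p)%N -> (0 < size ss)%N ->
  all (inS p k0) ss -> sorted leq ss ->
  mexp p k0 n ss kb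
  = (\sum_(i < size ss) mexp p k0 (nui n (size ss) i.+1) [:: nth 0%N ss i] kb)%N.
Proof.
move=> k0_range ss_gt0 ss_inS ss_sorted; set u := size ss; set c := kb%:Z + 1.
pose D (i : 'I_u) := dur p k0 (nth 0%N ss i) kb.
pose m (i : 'I_u) := (nui n u i.+1)%:Z.
have nth_inS (i : 'I_u) : inS p k0 (nth 0%N ss i) by exact: all_nthP.
have m_near (i j : 'I_u) : m i - 1 <= m j <= m i + 1.
  by have := nui_val n u i.+1; have := nui_val n u j.+1; rewrite /m; lia.
have stable (i j : 'I_u) : (i <= j)%N ->
    (0 < tent c (D i) (m i) -> 0 <= tent c (D j) (m j))
    /\ (0 < tent c (D j) (m j) -> 0 <= tent c (D i) (m i)).
  move=> le_ij; have le_nth : (nth 0%N ss i <= nth 0%N ss j)%N.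
    by apply: (sorted_leq_nth leq_trans leqnn) => //; rewrite inE.
  have [D_near D_even] := dur_step kb k0_range (nth_inS i) (nth_inS j) le_nth.
  apply: tent_sign_stable => // m_neq /D_even D_i_even.
  have m_i_even : (2 %| m i)%Z.
    rewrite dvdzE /= dvdn2; apply: (@nui_jump_even n u i.+1 j.+1 le_ij).
    by move: m_neq; rewrite eq_sym eqz_nat.
  by move: D_i_even m_i_even; rewrite /D; lia.
apply/eqP; rewrite -eqz_nat; apply/eqP; rewrite -[RHS]natz natr_sum.
under [RHS]eq_bigr do rewrite natz mexpE /Dur big_seq1 mul1r -/c.
rewrite mexpE sum_max0 => [|i j]; last first.
  by case: (leqP i j) => [/stable[]|/ltnW/stable[]].
rewrite sum_tent ?card_ord.
  congr (Num.max 0 (tent _ _ _)); first exact: Dur_nth.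
  rewrite -[in LHS](nui_sum n ss_gt0) -natz natr_sum.
  by apply: eq_bigr => i _; exact: natz.
case: (lerP c (n %/ u)%N%:Z) => [c_le|c_gt]; [left|right] => i;
  by have := nui_val n u i.+1; rewrite /m; lia.
Qed.

Theorem mainTheorem10 (R : comNzRingType) (w : nat -> R) (p k0 n : nat)
    (ss : seq nat) :
  prime p -> (7 <= p)%N -> (2 <= k0 <= p)%N ->
  (0 < size ss)%N -> all (inS p k0) ss -> sorted leq ss ->
  gpoly w p k0 n ss =
  \prod_(i < size ss) gpoly w p k0 (nui n (size ss) i.+1) [:: nth 0%N ss i].
Proof.
move=> _ _ k0_range ss_gt0 ss_inS ss_sorted.
have kbound_mono m : (m <= n.+1)%N -> (kbound p m <= kbound p n.+1)%N.
  by move=> le_m; rewrite /kbound leq_mul2r leq_add2r le_m orbT.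
rewrite (gpoly_widen w k0_range ss_gt0 ss_inS (kbound_mono _ (leqnSn n))).
have nth_inS (i : 'I_(size ss)) : inS p k0 (nth 0%N ss i).
  exact: all_nthP.
under [RHS]eq_bigr => i _ do rewrite (@gpoly_widen _ w p k0 _ _ (kbound p n.+1))
  //= ?nth_inS ?kbound_mono ?nui_le //.
rewrite exchange_big /=; apply: eq_bigr => kb _.
by rewrite prodrXr (mexp_balanced n kb k0_range ss_gt0 ss_inS ss_sorted).
Qed.
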